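(* Let $\mathcal R_0(p)_i=\sum_{k,\ell\ge0,\ \min\{k,\ell\}\le i\le\max\{k,\ell\}}\frac{p_kp_\ell}{1+|k-\ell|}$ for $p\in\mathcal M_1^+$. A probability measure $p\in\mathcal M_1^+$ is a fixed point of $\mathcal R_0$ if and only if its mean $m=\sum_{k\ge0}k\,p_k$ is finite, $p_{\lfloor m\rfloor}=\lfloor m\rfloor+1-m$, $p_{\lceil m\rceil}=m+1-\lceil m\rceil$, and $p_k=0$ for all other $k$ (including the case that $m$ is an integer and $p_m=1$).
   Context: $\mathcal M_1^+$ is the set of probability measures on $\mathbb N_0$, identified with nonnegative sequences $(p_k)_{k\ge0}$ summing to $1$. *)

From Stdlib Require Import Reals Lra Lia ZArith Arith.
From Coquelicot Require Import Coquelicot.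
Open Scope R_scope.

Definition is_prob (p : nat -> R) : Prop :=
  (forall k, 0 <= p k) /\ is_series p 1.

Definition natdist (k l : nat) : nat := ((k - l) + (l - k))%nat.

Definition R0_term (p : nat -> R) (i k l : nat) : R :=
  if ((Nat.min k l <=? i) && (i <=? Nat.max k l))%bool
  then p k * p l / (1 + INR (natdist k l))
  else 0.

(* R_0(p)_i (named Rcal0, since R0 is Stdlib zero) as an iterated series of nonnegative terms (absolutely summable
   since the terms are bounded by p_k p_l) *)
Definition Rcal0 (p : nat -> R) (i : nat) : R :=
  Series (fun k => Series (fun l => R0_term p i k l)).

Definition floor_nat (x : R) : nat := Z.to_nat (Int_part x).
Definition ceil_nat (x : R) : nat := Z.to_nat (- Int_part (- x)).

Definition mean_finite (p : nat -> R) : Prop := ex_series (fun k => INR k * p k).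
Definition mean (p : nat -> R) : R := Series (fun k => INR k * p k).

(* A fixed point is concentrated on two consecutive integers.  Let a be the least point of the
   support.  Every pair (k, l) counted in R_0(p)_a has k = a or l = a, so
   R_0(p)_a = p_a (2 W - p_a) with W = sum_l p_l / (1 + |a - l|), and R_0(p)_a = p_a forces
   2 W - p_a = 1 = sum_l p_l, i.e. sum_{l <> a} p_l (|a - l| - 1) / (|a - l| + 1) = 0.  All these
   terms are nonnegative and the weight is positive once |a - l| >= 2, so p_l = 0 there.
   Conversely, a direct computation shows that every probability measure on {a, a + 1} is fixed;
   its mean is a + p_{a+1}, which yields the floor/ceiling description. *)

From Stdlib Require Import Reals Lra Lia Wf_nat Classical.
From Coquelicot Require Import Coquelicot.
Open Scope R_scope.

Lemma sum_n_indicator (n : nat) (c : R) (N : nat) :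
  sum_n (fun k => if (k =? n)%nat then c else 0) N = if (N <? n)%nat then 0 else c.
Proof.
  induction N as [|N IH].
  - rewrite sum_O. now destruct n.
  - rewrite sum_Sn, IH. change plus with Rplus.
    destruct (Nat.eqb_spec (S N) n), (Nat.ltb_spec N n), (Nat.ltb_spec (S N) n); try lia; lra.
Qed.

Lemma is_series_indicator (n : nat) (c : R) :
  is_series (fun k => if (k =? n)%nat then c else 0) c.
Proof.
  assert (Hlim : is_lim_seq (sum_n (fun k => if (k =? n)%nat then c else 0)) c).
  { apply (is_lim_seq_ext_loc (fun _ => c)); [|apply is_lim_seq_const].
    exists n. intros N HN. rewrite sum_n_indicator.
    destruct (Nat.ltb_spec N n); [lia|reflexivity]. }
  exact Hlim.
Qed.

Lemma is_series_single (f : nat -> R) (n : nat) :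
  (forall k, k <> n -> f k = 0) -> is_series f (f n).
Proof.
  intros Hf. eapply is_series_ext; [|apply (is_series_indicator n (f n))].
  intros k. simpl. destruct (Nat.eqb_spec k n) as [-> | Hk]; [reflexivity|]. now rewrite Hf.
Qed.

Lemma is_series_pair (f : nat -> R) (m n : nat) :
  m <> n -> (forall k, k <> m -> k <> n -> f k = 0) -> is_series f (f m + f n).
Proof.
  intros Hmn Hf.
  eapply is_series_ext;
    [|apply (is_series_plus _ _ _ _ (is_series_indicator m (f m)) (is_series_indicator n (f n)))].
  intros k. cbv beta. change plus with Rplus.
  destruct (Nat.eqb_spec k m), (Nat.eqb_spec k n); subst; try lia; try lra.
  rewrite Hf by assumption. lra.
Qed.

Lemma is_series_nonneg_eq0 (f : nat -> R) :
  (forall k, 0 <= f k) -> is_series f 0 -> forall k, f k = 0.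
Proof.
  intros Hpos Hf k.
  assert (Hle : Series (fun l => if (l =? k)%nat then f k else 0) <= Series f).
  { apply Series_le; [|now exists 0].
    intros l. destruct (Nat.eqb_spec l k); subst; split; auto; lra. }
  assert (Hk : Series (fun l => if (l =? k)%nat then f k else 0) = f k)
    by apply is_series_unique, is_series_indicator.
  rewrite Hk, (is_series_unique _ _ Hf) in Hle.
  specialize (Hpos k). lra.
Qed.

Lemma floor_nat_add (a : nat) (t : R) : 0 <= t < 1 -> floor_nat (INR a + t) = a.
Proof.
  intros Ht. unfold floor_nat.
  rewrite <- (Int_part_spec _ (Z.of_nat a)); [lia|]. rewrite <- INR_IZR_INZ. lra.
Qed.

Lemma ceil_nat_INR (a : nat) : ceil_nat (INR a) = a.
Proof.
  unfold ceil_nat.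
  rewrite <- (Int_part_spec _ (- Z.of_nat a)); [lia|]. rewrite opp_IZR, <- INR_IZR_INZ. lra.
Qed.

Lemma ceil_nat_add (a : nat) (t : R) : 0 < t < 1 -> ceil_nat (INR a + t) = S a.
Proof.
  intros Ht. unfold ceil_nat.
  rewrite <- (Int_part_spec _ (- Z.of_nat a - 1)); [lia|].
  rewrite minus_IZR, opp_IZR, <- INR_IZR_INZ. lra.
Qed.

Lemma ceil_nat_floor_nat (x : R) : ceil_nat x = floor_nat x \/ ceil_nat x = S (floor_nat x).
Proof.
  unfold ceil_nat, floor_nat.
  destruct (base_Int_part x) as [Hx1 Hx2], (base_Int_part (- x)) as [Hy1 Hy2].
  assert (Hle : (Int_part x <= - Int_part (- x))%Z) by (apply le_IZR; rewrite opp_IZR; lra).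
  assert (Hlt : (- Int_part (- x) < Int_part x + 2)%Z)
    by (apply lt_IZR; rewrite opp_IZR, plus_IZR; simpl; lra).
  lia.
Qed.

Definition two_point_support (p : nat -> R) (a : nat) : Prop :=
  forall k, k <> a -> k <> S a -> p k = 0.

Lemma two_point_mass (p : nat -> R) (a : nat) :
  is_series p 1 -> two_point_support p a -> p a + p (S a) = 1.
Proof.
  intros Hp Ha. rewrite <- (is_series_unique _ _ Hp).
  symmetry. apply is_series_unique, is_series_pair; [lia|exact Ha].
Qed.

Lemma two_point_support_floor_ceil (p : nat -> R) (x : R) :
  (forall k, k <> floor_nat x -> k <> ceil_nat x -> p k = 0) ->
  two_point_support p (floor_nat x).
Proof.
  intros Hp k Hk HSk. apply Hp; [exact Hk|].
  destruct (ceil_nat_floor_nat x) as [-> | ->]; assumption.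
Qed.

Lemma R0_term_zero_l (p : nat -> R) (i k l : nat) : p k = 0 -> R0_term p i k l = 0.
Proof. intros H. unfold R0_term. rewrite H. destruct (_ && _)%bool; lra. Qed.

Lemma R0_term_zero_r (p : nat -> R) (i k l : nat) : p l = 0 -> R0_term p i k l = 0.
Proof. intros H. unfold R0_term. rewrite H. destruct (_ && _)%bool; lra. Qed.

Lemma Rcal0_two_point (p : nat -> R) (a : nat) :
  two_point_support p a -> p a + p (S a) = 1 -> forall i, Rcal0 p i = p i.
Proof.
  intros Ha Hmass i. unfold Rcal0.
  assert (Hrow : forall k, Series (fun l => R0_term p i k l)
                           = R0_term p i k a + R0_term p i k (S a)).
  { intros k. apply is_series_unique, is_series_pair; [lia|].
    intros l Hl HSl. apply R0_term_zero_r, Ha; assumption. }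
  assert (Hcol : forall k, k <> a -> k <> S a -> R0_term p i k a + R0_term p i k (S a) = 0).
  { intros k Hk HSk. rewrite !R0_term_zero_l by (apply Ha; assumption). lra. }
  rewrite (Series_ext _ _ Hrow),
    (is_series_unique _ _ (is_series_pair _ a (S a) (Nat.neq_succ_diag_r a) Hcol)).
  unfold R0_term.
  replace (natdist a a) with 0%nat by (unfold natdist; lia).
  replace (natdist a (S a)) with 1%nat by (unfold natdist; lia).
  replace (natdist (S a) a) with 1%nat by (unfold natdist; lia).
  replace (natdist (S a) (S a)) with 0%nat by (unfold natdist; lia).
  simpl INR.
  assert (Hi : (i < a \/ i = a \/ i = S a \/ S a < i)%nat) by lia.
  destruct Hi as [Hi | [-> | [-> | Hi]]];
    repeat match goal with |- context [(?m <=? ?n)%nat] => destruct (Nat.leb_spec m n) end;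
    simpl; try lia.
  - rewrite Ha by lia. lra.
  - replace (p (S a)) with (1 - p a) by lra. field.
  - replace (p a) with (1 - p (S a)) by lra. field.
  - rewrite Ha by lia. lra.
Qed.

Definition damped (p : nat -> R) (a l : nat) : R := p l / (1 + INR (natdist a l)).

Section LeastSupportPoint.

Variables (p : nat -> R) (a : nat).
Hypothesis p_ge0 : forall k, 0 <= p k.
Hypothesis p_sum : is_series p 1.
Hypothesis p_below : forall k, (k < a)%nat -> p k = 0.

Lemma damped_ge0 (l : nat) : 0 <= damped p a l.
Proof.
  unfold damped. pose proof (pos_INR (natdist a l)).
  apply Rdiv_le_0_compat; [apply p_ge0|lra].
Qed.

Lemma damped_le (n l : nat) : (n <= natdist a l)%nat -> (1 + INR n) * damped p a l <= p l.
Proof.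
  intros Hn. apply le_INR in Hn.
  apply Rle_trans with ((1 + INR (natdist a l)) * damped p a l).
  - apply Rmult_le_compat_r; [apply damped_ge0|lra].
  - unfold damped. right. field. pose proof (pos_INR (natdist a l)). lra.
Qed.

Lemma ex_series_damped : ex_series (damped p a).
Proof.
  apply (@ex_series_le _ R_CompleteNormedModule _ p); [|now exists 1].
  intros l. change (Rabs (damped p a l) <= p l).
  rewrite Rabs_pos_eq by apply damped_ge0.
  pose proof (damped_le 0 l (Nat.le_0_l _)). simpl in *. lra.
Qed.

Lemma damped_self : damped p a a = p a.
Proof. unfold damped, natdist. rewrite Nat.sub_diag. simpl. field. Qed.

Lemma Series_R0_term_least (k : nat) :
  Series (fun l => R0_term p a k l)
  = p a * damped p a k + (if (k =? a)%nat then p a * (Series (damped p a) - p a) else 0).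
Proof.
  assert (Hd : forall l, 1 + INR (natdist a l) <> 0)
    by (intros l; pose proof (pos_INR (natdist a l)); lra).
  destruct (Nat.ltb_spec k a) as [Hk | Hk].
  - rewrite (Series_ext _ (fun l => 0 * p l)), Series_scal_l
      by (intros l; rewrite R0_term_zero_l by (apply p_below, Hk); ring).
    unfold damped. rewrite (p_below k Hk).
    destruct (Nat.eqb_spec k a); [lia|]. unfold Rdiv. ring.
  - destruct (Nat.eqb_spec k a) as [-> | Hka].
    + rewrite damped_self, (Series_ext _ (fun l => p a * damped p a l)), Series_scal_l; [ring|].
      intros l. unfold R0_term, damped.
      destruct (Nat.leb_spec (Nat.min a l) a), (Nat.leb_spec a (Nat.max a l)); try lia.
      simpl. field. apply Hd.
    + rewrite (is_series_unique _ (R0_term p a k a)).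
      * unfold R0_term, damped.
        destruct (Nat.leb_spec (Nat.min k a) a), (Nat.leb_spec a (Nat.max k a)); try lia.
        replace (natdist k a) with (natdist a k) by (unfold natdist; lia).
        simpl. field. apply Hd.
      * apply is_series_single. intros l Hl.
        destruct (Nat.ltb_spec l a); [now apply R0_term_zero_r, p_below|].
        unfold R0_term. destruct (Nat.leb_spec (Nat.min k l) a); [lia|]. reflexivity.
Qed.

Lemma Rcal0_least : Rcal0 p a = p a * (2 * Series (damped p a) - p a).
Proof.
  unfold Rcal0. rewrite (Series_ext _ _ Series_R0_term_least), Series_plus.
  - rewrite Series_scal_l, (is_series_unique _ _ (is_series_indicator _ _)). ring.
  - apply (ex_series_scal_l _ _ ex_series_damped).
  - eexists. apply is_series_indicator.
Qed.

Lemma is_series_sub_twice_damped :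
  is_series (fun l => p l - 2 * damped p a l) (1 - 2 * Series (damped p a)).
Proof.
  apply (@is_series_minus R_AbsRing R_NormedModule); [exact p_sum|].
  apply (@is_series_scal_l R_AbsRing R_NormedModule), Series_correct, ex_series_damped.
Qed.

Lemma least_support_two_point : p a <> 0 -> Rcal0 p a = p a -> two_point_support p a.
Proof.
  intros Ha Hfix.
  assert (HW : 2 * Series (damped p a) - p a = 1).
  { rewrite Rcal0_least in Hfix. apply (Rmult_eq_reg_l (p a)); [|exact Ha].
    rewrite Rmult_1_r. exact Hfix. }
  set (h l := p l - 2 * damped p a l + (if (l =? a)%nat then p a else 0)).
  assert (Hh_sum : is_series h 0).
  { replace 0 with (plus (1 - 2 * Series (damped p a)) (p a))
      by (change plus with Rplus; lra).
    apply (@is_series_plus R_AbsRing R_NormedModule);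
      [apply is_series_sub_twice_damped|apply is_series_indicator]. }
  assert (Hh_pos : forall l, 0 <= h l).
  { intros l. unfold h. destruct (Nat.eqb_spec l a) as [-> | Hl].
    - rewrite damped_self. lra.
    - assert (Hd : (1 <= natdist a l)%nat) by (unfold natdist; lia).
      pose proof (damped_le 1 l Hd). simpl in *. lra. }
  intros l Hl HSl.
  destruct (Nat.ltb_spec l a); [now apply p_below|].
  pose proof (is_series_nonneg_eq0 h Hh_pos Hh_sum l) as Hl0.
  unfold h in Hl0. destruct (Nat.eqb_spec l a); [contradiction|].
  assert (Hd : (2 <= natdist a l)%nat) by (unfold natdist; lia).
  pose proof (damped_le 2 l Hd). pose proof (damped_ge0 l). simpl in *. lra.
Qed.

End LeastSupportPoint.

Lemma fixed_point_two_point_support (p : nat -> R) :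
  is_prob p -> (forall i, Rcal0 p i = p i) -> exists a, p a <> 0 /\ two_point_support p a.
Proof.
  intros [Hpos Hsum] Hfix.
  assert (Hex : exists n, p n <> 0).
  { apply NNPP. intros Hno.
    assert (Hzero : forall n, p n = 0) by (intros n; apply NNPP; eauto).
    pose proof (is_series_single p 0 (fun k _ => Hzero k)) as H0.
    rewrite Hzero in H0. apply is_series_unique in H0, Hsum. lra. }
  destruct (dec_inh_nat_subset_has_unique_least_element (fun n => p n <> 0))
    as [a [[Ha Hleast] _]]; [intros n; apply classic|exact Hex|].
  exists a. split; [exact Ha|].
  apply least_support_two_point; auto.
  intros k Hk. apply NNPP. intros Hk0. specialize (Hleast k Hk0). lia.
Qed.

Lemma two_point_support_mean (p : nat -> R) (a : nat) :
  is_prob p -> p a <> 0 -> two_point_support p a ->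
  mean_finite p /\
  p (floor_nat (mean p)) = INR (floor_nat (mean p)) + 1 - mean p /\
  p (ceil_nat (mean p)) = mean p + 1 - INR (ceil_nat (mean p)) /\
  (forall k, k <> floor_nat (mean p) -> k <> ceil_nat (mean p) -> p k = 0).
Proof.
  intros [Hpos Hsum] Ha Hsupp.
  pose proof (two_point_mass p a Hsum Hsupp) as Hmass.
  assert (Hmean_ser : is_series (fun k => INR k * p k) (INR a + p (S a))).
  { replace (INR a + p (S a)) with (INR a * p a + INR (S a) * p (S a))
      by (rewrite S_INR; replace (p a) with (1 - p (S a)) by lra; ring).
    apply (is_series_pair (fun k => INR k * p k)); [lia|].
    intros k Hk HSk. rewrite Hsupp by assumption. ring. }
  assert (Hmean : mean p = INR a + p (S a)) by exact (is_series_unique _ _ Hmean_ser).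
  assert (Ht : 0 <= p (S a) < 1) by (pose proof (Hpos a); pose proof (Hpos (S a)); split; lra).
  split; [eexists; exact Hmean_ser|].
  rewrite Hmean, floor_nat_add by exact Ht.
  destruct (Req_dec (p (S a)) 0) as [Ht0 | Ht0].
  - rewrite Ht0, Rplus_0_r, ceil_nat_INR. repeat split; try lra.
    intros k Hk _. destruct (Nat.eq_dec k (S a)) as [-> | HSk]; [exact Ht0|].
    exact (Hsupp k Hk HSk).
  - rewrite ceil_nat_add, S_INR by lra. repeat split; try lra.
    exact Hsupp.
Qed.

Theorem proposition4 (p : nat -> R) (hp : is_prob p) :
  (forall i : nat, Rcal0 p i = p i) <->
  (mean_finite p /\
   p (floor_nat (mean p)) = INR (floor_nat (mean p)) + 1 - mean p /\
   p (ceil_nat (mean p)) = mean p + 1 - INR (ceil_nat (mean p)) /\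
   (forall k : nat, k <> floor_nat (mean p) -> k <> ceil_nat (mean p) -> p k = 0)).
Proof.
  split.
  - intros Hfix.
    destruct (fixed_point_two_point_support p hp Hfix) as [a [Ha Hsupp]].
    exact (two_point_support_mean p a hp Ha Hsupp).
  - intros (_ & _ & _ & Hz).
    pose proof (two_point_support_floor_ceil p (mean p) Hz) as Hsupp.
    exact (Rcal0_two_point p _ Hsupp (two_point_mass p _ (proj2 hp) Hsupp)).
Qed.
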